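(* Let $X$ be a pointed manifold, $f:X\to\mathbb{R}$ a Morse function, $\{m_{x,y}\in C_{|x|-|y|-1}(\Omega X),\ x,y\in\mathrm{Crit}(f)\}$ a twisting cocycle and $(\mathcal{A},\{\nu_n\})$ an $\mathcal{A}_\infty$-module over $C_*(\Omega X)$. Then $\partial=\sum_{n\ge0}(\nu_{n+1}\otimes1)\tilde{\mathbf m}^n$ is a differential (of degree $-1$, with $\partial^2=0$) on $C_*(X,m_{x,y},\mathcal{A})=\mathcal{A}\otimes\mathbb{Z}\mathrm{Crit}(f)$.
   Context: $C_*(\Omega X)$: normalized cubical chains on Moore loops based at the basepoint, an $\mathcal{A}_\infty$-algebra with $\mu_1$ = differential, $\mu_2$ = Pontryagin product, $\mu_i=0$ for $i\ge3$. Koszul sign rule: $(f\otimes g)(x\otimes y)=(-1)^{|g||x|}f(x)\otimes g(y)$. A twisting cocycle satisfies $\partial m_{x,y}=\sum_z(-1)^{|x|-|z|}m_{x,z}m_{z,y}$. An $\mathcal{A}_\infty$-module over $C_*(\Omega X)$ is a graded $\mathbb{Z}$-module $\mathcal{A}$ with maps $\nu_n:\mathcal{A}\otimes C_*(\Omega X)^{\otimes n-1}\to\mathcal{A}$ of degree $n-2$ ($\nu_1$ a differential) satisfying, for all $N\ge1$, $\sum_{s+t=N,s\ge1}(-1)^{st}\nu_{t+1}(\nu_s\otimes1^{\otimes t})+\sum_{r+s+t=N,r,s\ge1}(-1)^{r+st}\nu_{r+t+1}(1^{\otimes r}\otimes\mu_s\otimes1^{\otimes t})=0$. With $\mathbf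 m(x)=\sum_y m_{x,y}\otimes y$, $\tilde{\mathbf m}$ is the degree $-1$ endomorphism of $\mathcal{A}\otimes TC_*(\Omega X)\otimes\mathbb{Z}\mathrm{Crit}(f)$ (where $TC_*(\Omega X)=\bigoplus_{i\ge0}C_*(\Omega X)^{\otimes i}$) given by $\tilde{\mathbf m}(\alpha\otimes\gamma_1\otimes\cdots\otimes\gamma_k\otimes x)=(1^{\otimes k+1}\otimes\mathbf m)(\alpha\otimes\gamma_1\otimes\cdots\otimes\gamma_k\otimes x)$. *)

From HB Require Import structures.
From mathcomp Require Import all_boot all_order all_algebra.
Set Implicit Arguments. Unset Strict Implicit. Unset Printing Implicit Defensive.
Import Order.TTheory GRing.Theory Num.Theory.
Local Open Scope ring_scope.

Definition ksign (e : int) : int := (-1) ^+ `|e|%N.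

Section Graded.
Variable M : zmodType.

(* hom k x  <->  x is homogeneous of degree k.  A grading of M is a
   direct-sum decomposition M = (+)_k M_k into subgroups. *)
Definition is_grading (hom : int -> M -> Prop) : Prop :=
  [/\ forall k, hom k 0,
      forall k x y, hom k x -> hom k y -> hom k (x - y),
      forall k l x, hom k x -> hom l x -> k <> l -> x = 0
    & forall x, exists s : seq (int * M),
        (forall kx, kx \in s -> hom kx.1 kx.2) /\ x = \sum_(kx <- s) kx.2].

Definition nonneg_grading (hom : int -> M -> Prop) : Prop :=
  forall k x, k < 0 -> hom k x -> x = 0.

Definition hom_seq (hom : int -> M -> Prop) (cs : seq M) (qs : seq int) : Prop :=
  size cs = size qs /\ forall i, (i < size cs)%N -> hom (nth 0 qs i) (nth 0 cs i).
End Graded.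

Section Ainf.
Variables (C A : zmodType).

(* the A_oo operations of a dga: mu_1 = d, mu_2 = pr, mu_i = 0 for i >= 3;
   mu cs = mu_{size cs}(c_1 (x) ... (x) c_s) *)
Definition mu_of (d : C -> C) (pr : C -> C -> C) (cs : seq C) : C :=
  match cs with
  | [:: c] => d c
  | [:: c1; c2] => pr c1 c2
  | _ => 0
  end.

Definition additive_fun (f : C -> C) : Prop := forall x y, f (x + y) = f x + f y.
Definition biadditive_fun (f : C -> C -> C) : Prop :=
  (forall x x' y, f (x + x') y = f x y + f x' y) /\
  (forall x y y', f x (y + y') = f x y + f x y').

(* nu a cs = nu_n(a (x) c_1 (x) ... (x) c_{n-1}) with n = size cs + 1 *)
Definition multiadditive (nu : A -> seq C -> A) : Prop :=
  (forall a a' cs, nu (a + a') cs = nu a cs + nu a' cs) /\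
  (forall a cs i c c', (i < size cs)%N ->
     nu a (set_nth 0 cs i (c + c')) = nu a (set_nth 0 cs i c) + nu a (set_nth 0 cs i c')).

(* nu_n has degree n - 2 *)
Definition nu_graded (hA : int -> A -> Prop) (hC : int -> C -> Prop)
  (nu : A -> seq C -> A) : Prop :=
  forall a p cs qs, hA p a -> hom_seq hC cs qs ->
    hA (p + \sum_(q <- qs) q + (size cs)%:Z - 1) (nu a cs).

(* A_oo-algebra relations, evaluated on homogeneous inputs with Koszul signs:
   sum_{r+s+t=N, s>=1} (-1)^{r+st} mu_{r+1+t}(1^r (x) mu_s (x) 1^t) = 0 *)
Definition ainf_alg_rel (hC : int -> C -> Prop) (mu : seq C -> C) : Prop :=
  forall cs qs, hom_seq hC cs qs ->
    let N := size cs in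
    \sum_(r < N.+1) \sum_(s < N.+1 | (1 <= s)%N && (r + s <= N)%N)
       mu (take r cs ++ mu (take s (drop r cs)) :: drop (r + s) cs)
       *~ (ksign (Posz (r + s * (N - r - s))%N)
           * ksign (((Posz s) - 2) * \sum_(q <- take r qs) q)) = 0.

(* A_oo-module relations (as in the paper), evaluated on homogeneous inputs
   a (x) c_1 (x) ... (x) c_{N-1}, with Koszul signs *)
Definition ainf_mod_rel (hA : int -> A -> Prop) (hC : int -> C -> Prop)
  (nu : A -> seq C -> A) (mu : seq C -> C) : Prop :=
  forall a p cs qs, hA p a -> hom_seq hC cs qs ->
    let N := (size cs).+1 in
    \sum_(s < N.+1 | (1 <= s)%N)
       nu (nu a (take s.-1 cs)) (drop s.-1 cs) *~ ksign (Posz (s * (N - s))%N)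
    + \sum_(r < N.+1) \sum_(s < N.+1 | [&& (1 <= r)%N, (1 <= s)%N & (r + s <= N)%N])
       nu a (take r.-1 cs ++ mu (take s (drop r.-1 cs)) :: drop (r.-1 + s) cs)
       *~ (ksign (Posz (r + s * (N - r - s))%N)
           * ksign (((Posz s) - 2) * (p + \sum_(q <- take r.-1 qs) q)))
    = 0.
End Ainf.

Section Twisted.
Variables (C A : zmodType) (Crit : finType) (ind : Crit -> nat).

Definition twisting_cocycle (hC : int -> C -> Prop) (d : C -> C)
  (pr : C -> C -> C) (m : Crit -> Crit -> C) : Prop :=
  (forall x y, hC ((ind x)%:Z - (ind y)%:Z - 1) (m x y)) /\
  (forall x y, d (m x y) =
     \sum_(z : Crit) pr (m x z) (m z y) *~ ksign ((ind x)%:Z - (ind z)%:Z)).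

(* a signed pure tensor  alpha (x) gamma_1 (x) ... (x) gamma_k (x) x  in
   A (x) TC (x) Z Crit, together with the degree |alpha| + sum |gamma_i| *)
Record mterm := MTerm { mt_a : A; mt_gs : seq C; mt_x : Crit; mt_deg : int }.

Variable m : Crit -> Crit -> C.

Definition mtil_step (t : mterm) : seq mterm :=
  [seq MTerm (mt_a t *~ ksign (mt_deg t)) (rcons (mt_gs t) (m (mt_x t) y)) y
           (mt_deg t + ((ind (mt_x t))%:Z - (ind y)%:Z - 1)) | y <- enum Crit].

Definition mtil_pow (n : nat) (ts : seq mterm) : seq mterm :=
  iter n (fun ts => flatten (map mtil_step ts)) ts.

(* Elements of A (x) Z Crit are functions v : Crit -> A (v = sum_x v x (x) x);
   v is homogeneous of degree k iff v x in A_{k - |x|}.  The differential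
   partial = sum_{n >= 0} (nu_{n+1} (x) 1) m~^n, applied to a homogeneous v of
   degree k, truncated to n < Nb (for Nb >= #|Crit| all further terms vanish). *)
Definition twisted_diff (nu : A -> seq C -> A) (Nb : nat) (k : int)
  (v : Crit -> A) : Crit -> A :=
  fun y => \sum_(x : Crit) \sum_(n < Nb)
     \sum_(t <- mtil_pow n [:: MTerm (v x) [::] x (k - (ind x)%:Z)] | mt_x t == y)
        nu (mt_a t) (mt_gs t).
End Twisted.

From mathcomp Require Import all_boot all_order all_algebra.
From mathcomp Require Import ring lra zify.
Import Order.TTheory GRing.Theory Num.Theory.
Local Open Scope ring_scope.
Set Implicit Arguments. Unset Strict Implicit. Unset Printing Implicit Defensive.

(* Unfolding m~^n, the component of [partial v] at [y] is a sum,
   over paths x = z_0, z_1, ..., z_n = y of critical points, of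
   +-nu_{n+1}(v_x, m_{z_0 z_1}, ..., m_{z_{n-1} z_n}).  A path that is not
   strictly decreasing in Morse index contributes 0, since C_*(Omega X) has no
   negative degrees; so only paths of length < #Crit matter.  In [partial^2],
   the terms attached to one path are exactly the nu o nu half of the
   A_oo-module relation on v_x (x) m_{z_0 z_1} (x) ..., hence minus its mu half.
   As mu_s = 0 for s >= 3, that half consists of terms with d applied to one
   m_{z_i z_{i+1}} and terms with a product of two consecutive m's.  The
   twisting cocycle equation turns the former, on paths of length L, into the
   negatives of the latter on paths of length L + 1, so the sum over all path
   lengths telescopes to 0. *)

Lemma ksignE e : ksign e = (-1) ^ e.
Proof. by case: e. Qed.

Lemma ksignD a b : ksign (a + b) = ksign a * ksign b.
Proof. by rewrite !ksignE exprzDr // unitrN1. Qed.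

Lemma ksignK a : ksign a * ksign a = 1.
Proof. by rewrite /ksign -exprD addnn -signr_odd odd_double. Qed.

Lemma ksign_mod2 a b t : a = b + (t + t) -> ksign a = ksign b.
Proof. by move=> ->; rewrite ksignD ksignD ksignK mulr1. Qed.

Lemma ksign1D a : ksign (1 + a) = - ksign a.
Proof. by rewrite ksignD mulN1r. Qed.

Section AdditiveFun.
Variables (V W : zmodType) (f : V -> W).
Hypothesis fD : forall a b, f (a + b) = f a + f b.

Lemma additive0 : f 0 = 0.
Proof. by apply: (@addrI _ (f 0)); rewrite -fD !addr0. Qed.

Lemma additiveN a : f (- a) = - f a.
Proof. by apply: (@addrI _ (f a)); rewrite -fD !subrr additive0. Qed.

Lemma additiveMn a n : f (a *+ n) = f a *+ n.
Proof. by elim: n => [|n IH]; rewrite ?mulr0n ?additive0 // !mulrS fD IH. Qed.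

Lemma additiveMz a z : f (a *~ z) = f a *~ z.
Proof.
case: z => n; first by rewrite -!pmulrn additiveMn.
by rewrite !NegzE !mulrNz additiveN -!pmulrn additiveMn.
Qed.

Lemma additive_sum I (r : seq I) (P : pred I) F :
  f (\sum_(i <- r | P i) F i) = \sum_(i <- r | P i) f (F i).
Proof. exact: (big_morph f fD additive0). Qed.

End AdditiveFun.

Section OrdinalSums.
Variable V : zmodType.

Lemma eq_big_ord_tail0 (g : nat -> V) K B1 B2 :
    (forall n, (K <= n)%N -> g n = 0) -> (K <= B1)%N -> (K <= B2)%N ->
  \sum_(n < B1) g n = \sum_(n < B2) g n.
Proof.
move=> g0 h1 h2.
suff E B : (K <= B)%N -> \sum_(n < B) g n = \sum_(n < K) g n by rewrite !E.
move=> hB; rewrite [RHS](big_ord_widen _ _ hB) [RHS]big_mkcond /=.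
by apply: eq_bigr => i _; case: ifP => // /negbT; rewrite -leqNgt => /g0.
Qed.

Lemma big_ord_triangle (f : nat -> nat -> V) K :
  \sum_(n < K) \sum_(n' < K - n) f n n' = \sum_(L < K) \sum_(n < L.+1) f n (L - n)%N.
Proof.
elim: K => [|K IH]; first by rewrite !big_ord0.
rewrite [RHS]big_ord_recr /= -IH [LHS]big_ord_recr /= subSnn big_ord1 /=.
have -> : \sum_(i < K) \sum_(n' < K.+1 - i) f i n' =
          \sum_(i < K) (\sum_(n' < K - i) f i n' + f i (K - i)%N).
  apply: eq_bigr => i _; rewrite subSn; last exact: ltnW (ltn_ord i).
  by rewrite big_ord_recr.
by rewrite big_split /= -addrA [in RHS]big_ord_recr /= subnn.
Qed.

Lemma if_big I (r : seq I) (P : pred I) (c : bool) (F : I -> V) :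
  (if c then \sum_(i <- r | P i) F i else 0) = \sum_(i <- r | P i) (if c then F i else 0).
Proof. by case: c; rewrite // big1. Qed.

Lemma big_pairs_s_le2 L (R : nat -> nat -> V) :
    (forall r s, (1 <= r)%N -> (3 <= s)%N -> (r + s <= L.+1)%N -> R r s = 0) ->
  \sum_(r < L.+2) \sum_(s < L.+2 | [&& 1 <= r, 1 <= s & r + s <= L.+1]%N) R r s =
  \sum_(i < L) R i.+1 1%N + \sum_(i < L) (if (i.+2 <= L)%N then R i.+1 2%N else 0).
Proof.
move=> R0.
pose g r s := if [&& 1 <= r, 1 <= s & r + s <= L.+1]%N then R r s else 0.
have split_s (r : 'I_L.+2) :
    \sum_(s < L.+2 | [&& 1 <= r, 1 <= s & r + s <= L.+1]%N) R r s =
    (if (1 <= r)%N && (r + 1 <= L.+1)%N then R r 1%N else 0) +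
    (if (1 <= r)%N && (r + 2 <= L.+1)%N then R r 2%N else 0).
  rewrite big_mkcond /= (@eq_big_ord_tail0 (g r) (minn 3 L.+2) L.+2 3).
  - by rewrite !big_ord_recl big_ord0 /g /= andbF add0r addr0.
  - move=> s; rewrite /g geq_min; case: ifP => // /and3P [? ? ?] /orP [] ?;
      [exact: R0 | lia].
  - exact: geq_minr.
  - exact: geq_minl.
rewrite (eq_bigr _ (fun r _ => split_s r)) big_split /=; congr (_ + _).
  rewrite big_ord_recl /= add0r big_ord_recr /= addn1 ltnn addr0.
  by apply: eq_bigr => i _; rewrite /bump /= addn1 ltnS ltn_ord.
rewrite big_ord_recl /= add0r big_ord_recr /= /bump /= [X in _ + X]ifF ?addr0;
  last by rewrite add1n addn2 ltnNge leqnSn.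
by apply: eq_bigr => i _; rewrite !add1n addn2.
Qed.

End OrdinalSums.

Section SumWords.
Variables (T : finType) (V : zmodType).

Fixpoint sum_words (n : nat) (F : seq T -> V) : V :=
  if n is n'.+1 then \sum_(y : T) sum_words n' (fun ys => F (y :: ys)) else F [::].

Lemma eq_sum_words n F G :
  (forall ys, size ys = n -> F ys = G ys) -> sum_words n F = sum_words n G.
Proof.
elim: n F G => [|n IH] F G FG /=; first exact: FG.
by apply: eq_bigr => y _; apply: IH => ys sz; apply: FG; rewrite /= sz.
Qed.

Lemma sum_words_big n I (r : seq I) (P : pred I) (F : I -> seq T -> V) :
  sum_words n (fun ys => \sum_(i <- r | P i) F i ys) =
  \sum_(i <- r | P i) sum_words n (F i).
Proof.
elim: n F => [|n IH] F //=.
under eq_bigr => y _ do rewrite (IH (fun i ys => F i (y :: ys))).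
by rewrite exchange_big.
Qed.

Lemma sum_words0 n : sum_words n (fun _ => 0) = 0.
Proof. by elim: n => [|n IH] //=; rewrite big1. Qed.

Lemma sum_wordsD n F G :
  sum_words n (fun ys => F ys + G ys) = sum_words n F + sum_words n G.
Proof.
have := sum_words_big n [:: true; false] predT (fun b ys => if b then F ys else G ys).
rewrite !big_cons !big_nil /= addr0 => <-.
by apply: eq_sum_words => ys _; rewrite !big_cons big_nil addr0.
Qed.

Lemma sum_words_cat a b F :
  sum_words (a + b) F = sum_words a (fun u => sum_words b (fun w => F (u ++ w))).
Proof. by elim: a F => [|a IH] F //=; apply: eq_bigr => y _; rewrite IH. Qed.

Lemma sum_words_split n L F : (n <= L)%N ->
  sum_words L F = sum_words n (fun u => sum_words (L - n) (fun w => F (u ++ w))).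
Proof. by move=> h; rewrite -sum_words_cat subnKC. Qed.

Lemma sum_wordsC n n' (H : seq T -> seq T -> V) :
  sum_words n (fun ys => sum_words n' (fun ys' => H ys ys')) =
  sum_words n' (fun ys' => sum_words n (fun ys => H ys ys')).
Proof.
elim: n H => [|n IH] H //=.
under eq_bigr => y _ do rewrite (IH (fun ys ys' => H (y :: ys) ys')).
by rewrite -sum_words_big.
Qed.

End SumWords.

Lemma sum_words_morph (T : finType) (V W : zmodType) (f : V -> W) n (F : seq T -> V) :
    (forall a b, f (a + b) = f a + f b) ->
  f (sum_words n F) = sum_words n (fun ys => f (F ys)).
Proof.
move=> fD; elim: n F => [|n IH] F //=.
by rewrite (additive_sum fD); apply: eq_bigr => y _; apply: IH.
Qed.

Lemma sum_wordsN (T : finType) (V : zmodType) n (F : seq T -> V) : sum_words n (fun ys => - F ys) = - sum_words n F.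
Proof. by rewrite (sum_words_morph (f := -%R)) // => a b; rewrite opprD. Qed.

Section Homogeneous.
Variables (M : zmodType) (hom : int -> M -> Prop).
Hypothesis hom_grading : is_grading hom.

Lemma hom0 j : hom j 0.
Proof. by case: hom_grading. Qed.

Lemma homB j a b : hom j a -> hom j b -> hom j (a - b).
Proof. by case: hom_grading => _ hB _ _; apply: hB. Qed.

Lemma homN j a : hom j a -> hom j (- a).
Proof. by move=> ha; rewrite -sub0r; apply: homB => //; apply: hom0. Qed.

Lemma homD j a b : hom j a -> hom j b -> hom j (a + b).
Proof. by move=> ha hb; rewrite -[b]opprK; apply: homB => //; apply: homN. Qed.

Lemma hom_sum j I (r : seq I) (P : pred I) F :
  (forall i, P i -> hom j (F i)) -> hom j (\sum_(i <- r | P i) F i).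
Proof.
move=> hF; elim/big_rec: _ => [|i b Pi hb]; first exact: hom0.
by apply: homD => //; apply: hF.
Qed.

Lemma homMz j a z : hom j a -> hom j (a *~ z).
Proof.
move=> ha; have hn n : hom j (a *+ n).
  by elim: n => [|n IH]; [rewrite mulr0n; apply: hom0 | rewrite mulrS; apply: homD].
by case: z => n; [rewrite -pmulrn | rewrite NegzE mulrNz -pmulrn; apply: homN].
Qed.

Lemma hom_sum_words j (T : finType) n (F : seq T -> M) :
  (forall ys, size ys = n -> hom j (F ys)) -> hom j (sum_words n F).
Proof.
elim: n F => [|n IH] F hF /=; first exact: hF.
by apply: hom_sum => z _; apply: IH => ys sz; apply: hF; rewrite /= sz.
Qed.

End Homogeneous.

Section TwistedDifferential.
Variables (C A : zmodType) (hC : int -> C -> Prop) (hA : int -> A -> Prop)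
  (d : C -> C) (pr : C -> C -> C)
  (Crit : finType) (ind : Crit -> nat) (m : Crit -> Crit -> C)
  (nu : A -> seq C -> A).

Local Notation mdeg x y := ((ind x)%:Z - (ind y)%:Z - 1).

Fixpoint mpath (x : Crit) (ys : seq Crit) : seq C :=
  if ys is y :: ys' then m x y :: mpath y ys' else [::].

Fixpoint mpath_deg (x : Crit) (ys : seq Crit) : seq int :=
  if ys is y :: ys' then mdeg x y :: mpath_deg y ys' else [::].

(* [e] is the degree of the tensor reached so far; each application of
   m~ multiplies by (-1)^e and raises the degree by that of the new m_{x,y}. *)
Fixpoint koszul_exp (e : int) (x : Crit) (ys : seq Crit) : int :=
  if ys is y :: ys' then e + koszul_exp (e + mdeg x y) y ys' else 0.

Lemma size_mpath x ys : size (mpath x ys) = size ys.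
Proof. by elim: ys x => [|y ys IH] x //=; rewrite IH. Qed.

Lemma mpath_cat x u w : mpath x (u ++ w) = mpath x u ++ mpath (last x u) w.
Proof. by elim: u x => [|y u IH] x //=; rewrite IH. Qed.

Lemma size_mpath_deg x ys : size (mpath_deg x ys) = size ys.
Proof. by elim: ys x => [|y ys IH] x //=; rewrite IH. Qed.

Lemma mpath_deg_cat x u w :
  mpath_deg x (u ++ w) = mpath_deg x u ++ mpath_deg (last x u) w.
Proof. by elim: u x => [|y u IH] x //=; rewrite IH. Qed.

Lemma sum_mpath_deg x ys :
  \sum_(q <- mpath_deg x ys) q = (ind x)%:Z - (ind (last x ys))%:Z - (size ys)%:Z.
Proof.
elim: ys x => [|y ys IH] x /=; first by rewrite big_nil subrr subr0.
by rewrite big_cons IH intS; ring.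
Qed.

Lemma koszul_exp_shift e f x ys :
  koszul_exp (e + f) x ys = koszul_exp e x ys + f * (size ys)%:Z.
Proof.
elim: ys e x => [|y ys IH] e x /=; first by rewrite mulr0 addr0.
rewrite (_ : e + f + mdeg x y = e + mdeg x y + f); last by ring.
by rewrite IH intS; ring.
Qed.

Lemma koszul_exp_cat e x u w : koszul_exp e x (u ++ w) =
  koszul_exp e x u +
  koszul_exp (e + ((ind x)%:Z - (ind (last x u))%:Z - (size u)%:Z)) (last x u) w.
Proof.
elim: u e x => [|y u IH] e x /=; first by rewrite subrr subr0 ?addr0 add0r.
by rewrite IH addrA intS; congr (_ + koszul_exp _ _ _); ring.
Qed.

Lemma mtil_powS n (ts : seq (mterm C A Crit)) :
  mtil_pow ind m n.+1 ts = mtil_pow ind m n (flatten (map (mtil_step ind m) ts)).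
Proof. exact: iterSr. Qed.

Lemma big_mtil_pow n ts (G : mterm C A Crit -> A) :
  \sum_(t <- mtil_pow ind m n ts) G t =
  \sum_(t0 <- ts) \sum_(t <- mtil_pow ind m n [:: t0]) G t.
Proof.
elim: n ts G => [|n IH] ts G.
  by apply: eq_bigr => t _; rewrite big_seq1.
rewrite mtil_powS IH big_flatten big_map; apply: eq_bigr => t0 _.
by rewrite mtil_powS IH big_flatten big_map big_seq1.
Qed.

Lemma big_mtil_pow_words n a gs x e (F : A -> seq C -> Crit -> A) :
  \sum_(t <- mtil_pow ind m n [:: MTerm a gs x e]) F (mt_a t) (mt_gs t) (mt_x t) =
  sum_words n (fun ys =>
    F (a *~ ksign (koszul_exp e x ys)) (gs ++ mpath x ys) (last x ys)).
Proof.
elim: n a gs x e => [|n IH] a gs x e.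
  by rewrite /mtil_pow /= big_seq1 /= cats0.
rewrite mtil_powS big_mtil_pow /= cats0 /mtil_step big_map big_enum /=.
apply: eq_bigr => y _; rewrite IH; apply: eq_sum_words => ys _.
by rewrite -mulrzA -ksignD cat_rcons.
Qed.

Definition twist (e : int) (x : Crit) (ys : seq Crit) (a : A) : A :=
  nu (a *~ ksign (koszul_exp e x ys)) (mpath x ys).

Lemma twisted_diffE Nb k v y : twisted_diff ind m nu Nb k v y =
  \sum_(x : Crit) \sum_(n < Nb) sum_words n (fun ys =>
     if last x ys == y then twist (k - (ind x)%:Z) x ys (v x) else 0).
Proof.
apply: eq_bigr => x _; apply: eq_bigr => n _.
rewrite big_mkcond (big_mtil_pow_words n (v x) [::] x (k - (ind x)%:Z)
  (fun a gs x' => if x' == y then nu a gs else 0)).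
by apply: eq_sum_words.
Qed.

Hypothesis hC_nonneg : nonneg_grading hC.
Hypothesis m_cocycle : twisting_cocycle ind hC d pr m.
Hypothesis nu_additive : multiadditive nu.

Lemma m_hom x y : hC (mdeg x y) (m x y).
Proof. by case: m_cocycle. Qed.

Lemma d_m x y :
  d (m x y) = \sum_(z : Crit) pr (m x z) (m z y) *~ ksign ((ind x)%:Z - (ind z)%:Z).
Proof. by case: m_cocycle. Qed.

Lemma m_eq0 x y : (ind x <= ind y)%N -> m x y = 0.
Proof.
move=> le_xy; apply: (hC_nonneg (k := mdeg x y)); last exact: m_hom.
by move: le_xy; rewrite -lez_nat => ?; lra.
Qed.

Definition ind_decreasing x zs := path (fun a b => (ind b < ind a)%N) x zs.

Lemma size_ind_decreasing x zs : ind_decreasing x zs -> (size zs < #|Crit|)%N.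
Proof.
move=> dec; have uniq_xzs : uniq (x :: zs).
  apply: (@sorted_uniq _ (fun a b => (ind b < ind a)%N)); last exact: dec.
  - by move=> a b c /= ? ?; apply: ltn_trans; eassumption.
  - by move=> a /=; rewrite ltnn.
by have := max_card (mem (x :: zs)); rewrite (card_uniqP uniq_xzs).
Qed.

Lemma mpath_has0 x zs : ~~ ind_decreasing x zs -> 0 \in mpath x zs.
Proof.
elim: zs x => [|y zs IH] x //=; rewrite negb_and => /orP [|/IH].
  by rewrite -leqNgt => /m_eq0 ->; rewrite mem_head.
by rewrite in_cons orbC => ->.
Qed.

Lemma nuDl a a' cs : nu (a + a') cs = nu a cs + nu a' cs.
Proof. by case: nu_additive. Qed.

Lemma nu0l cs : nu 0 cs = 0.
Proof. exact: (additive0 (f := nu^~ cs) (fun a b => nuDl a b cs)). Qed.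

Lemma nuMzl a cs z : nu (a *~ z) cs = nu a cs *~ z.
Proof. exact: (additiveMz (f := nu^~ cs) (fun a b => nuDl a b cs)). Qed.

Lemma nuD_at a s1 s2 c c' :
  nu a (s1 ++ (c + c') :: s2) = nu a (s1 ++ c :: s2) + nu a (s1 ++ c' :: s2).
Proof.
have set_at c0 : set_nth 0 (s1 ++ 0 :: s2) (size s1) c0 = s1 ++ c0 :: s2.
  by elim: s1 {c c'} => [|c1 s1 IH] //=; rewrite IH.
rewrite -(set_at (c + c')) -(set_at c) -(set_at c'); case: nu_additive => _ -> //.
by rewrite size_cat /= -[X in (X < _)%N]addn0 ltn_add2l.
Qed.

Lemma nu_mem0 a cs : 0 \in cs -> nu a cs = 0.
Proof.
case/splitPr => s1 s2; have := nuD_at a s1 s2 0 0; rewrite addr0 => dbl.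
by apply: (addrI (nu a (s1 ++ 0 :: s2))); rewrite addr0 -dbl.
Qed.

Lemma twistD e x ys a b : twist e x ys (a + b) = twist e x ys a + twist e x ys b.
Proof. by rewrite /twist mulrzDl nuDl. Qed.

Hypothesis hA_grading : is_grading hA.
Hypothesis nu_hom : nu_graded hA hC nu.

Lemma mpath_hom x ys : hom_seq hC (mpath x ys) (mpath_deg x ys).
Proof.
split; first by rewrite size_mpath size_mpath_deg.
elim: ys x => [|z ys IH] x [|i] //= lt_i; [exact: m_hom | exact: IH].
Qed.

Lemma twisted_diff_hom Nb k v y : (forall x, hA (k - (ind x)%:Z) (v x)) ->
  hA (k - 1 - (ind y)%:Z) (twisted_diff ind m nu Nb k v y).
Proof.
move=> hv; rewrite twisted_diffE.
apply: hom_sum => // x _; apply: hom_sum => // n _.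
apply: hom_sum_words => // ys sz; case: eqP => [<-|_]; last exact: hom0.
have := nu_hom (homMz hA_grading (ksign (koszul_exp (k - (ind x)%:Z) x ys)) (hv x))
  (mpath_hom x ys).
rewrite sum_mpath_deg size_mpath.
by congr hA; ring.
Qed.

Lemma twist_twisted_diff Nb k v e x' ys' (c : bool) :
  (if c then twist e x' ys' (twisted_diff ind m nu Nb k v x') else 0) =
  \sum_(x : Crit) \sum_(n < Nb) sum_words n (fun ys =>
     if c then (if last x ys == x' then
       twist e x' ys' (twist (k - (ind x)%:Z) x ys (v x)) else 0)
     else 0).
Proof.
case: c; last by rewrite big1 // => x _; rewrite big1 // => n _; rewrite sum_words0.
rewrite twisted_diffE (additive_sum (twistD e x' ys')); apply: eq_bigr => x _.
rewrite (additive_sum (twistD e x' ys')); apply: eq_bigr => n _.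
rewrite (sum_words_morph _ _ (twistD e x' ys')); apply: eq_sum_words => ys _.
by case: ifP => // _; rewrite (additive0 (twistD e x' ys')).
Qed.

Definition dd_term k (v : Crit -> A) y x n n' := sum_words n (fun ys =>
  sum_words n' (fun ys' => if last (last x ys) ys' == y then
    twist (k - 1 - (ind (last x ys))%:Z) (last x ys) ys' (twist (k - (ind x)%:Z) x ys (v x))
    else 0)).

Lemma dd_termE k v y x n n' : dd_term k v y x n n' =
  \sum_(x' : Crit) sum_words n' (fun ys' => sum_words n (fun ys =>
    if last x' ys' == y then (if last x ys == x' then
      twist (k - 1 - (ind x')%:Z) x' ys' (twist (k - (ind x)%:Z) x ys (v x)) else 0)
    else 0)).
Proof.
under eq_bigr => x' _ do rewrite sum_wordsC.
rewrite -sum_words_big; apply: eq_sum_words => ys _.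
rewrite -sum_words_big; apply: eq_sum_words => ys' _.
rewrite (bigD1 (last x ys)) //= eqxx big1 ?addr0 // => x' /negbTE.
by rewrite eq_sym => ->; case: ifP.
Qed.

Lemma twisted_diff2E Nb k v y :
  twisted_diff ind m nu Nb (k - 1) (twisted_diff ind m nu Nb k v) y =
  \sum_(x : Crit) \sum_(n < Nb) \sum_(n' < Nb) dd_term k v y x n n'.
Proof.
rewrite twisted_diffE.
under eq_bigr => x' _ do under eq_bigr => n' _ do
  under eq_sum_words => ys' _ do rewrite twist_twisted_diff.
under eq_bigr => x' _ do under eq_bigr => n' _ do rewrite sum_words_big.
under eq_bigr => x' _ do under eq_bigr => n' _ do under eq_bigr => x _ do rewrite sum_words_big.
under [RHS]eq_bigr => x _ do under eq_bigr => n _ do under eq_bigr => n' _ do rewrite dd_termE.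
under eq_bigr => x' _ do rewrite exchange_big.
rewrite exchange_big; apply: eq_bigr => x _.
under eq_bigr => x' _ do rewrite exchange_big.
rewrite exchange_big; apply: eq_bigr => n _.
rewrite exchange_big; apply: eq_bigr => n' _.
by apply: eq_bigr => x' _; rewrite sum_wordsC.
Qed.

Lemma dd_term_long k v y x n n' : (#|Crit| <= n + n')%N -> dd_term k v y x n n' = 0.
Proof.
move=> long; rewrite -[RHS](@sum_words0 Crit A n); apply: eq_sum_words => ys sz.
rewrite -[RHS](@sum_words0 Crit A n'); apply: eq_sum_words => ys' sz'.
case: ifP => // _.
have : ~~ ind_decreasing x (ys ++ ys').
  by apply/negP => /size_ind_decreasing; rewrite size_cat sz sz' ltnNge long.
rewrite /ind_decreasing cat_path negb_and => /orP [] /mpath_has0 has0.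
  by rewrite /twist [in X in nu (X *~ _)]nu_mem0 // mul0rz nu0l.
by rewrite /twist nu_mem0.
Qed.

Lemma dd_sum_diagonals Nb k v y x : (#|Crit| <= Nb)%N ->
  \sum_(n < Nb) \sum_(n' < Nb) dd_term k v y x n n' =
  \sum_(L < #|Crit|.+1) \sum_(n < L.+1) dd_term k v y x n (L - n).
Proof.
move=> le_Nb; rewrite -big_ord_triangle.
transitivity (\sum_(n < Nb) \sum_(n' < #|Crit|.+1 - n) dd_term k v y x n n').
  apply: eq_bigr => n _; apply: (@eq_big_ord_tail0 _ _ (#|Crit| - n)); try lia.
  by move=> n' ?; apply: dd_term_long; lia.
apply: (@eq_big_ord_tail0 _ (fun n => \sum_(n' < #|Crit|.+1 - n) dd_term k v y x n n')
  #|Crit|) => // n ?.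
by apply: big1 => n' _; apply: dd_term_long; lia.
Qed.

Lemma dd_diagonalE k v y x L :
  \sum_(n < L.+1) dd_term k v y x n (L - n) =
  sum_words L (fun zs => if last x zs == y then
     (\sum_(n < L.+1) nu (nu (v x) (take n (mpath x zs))) (drop n (mpath x zs))
        *~ ksign ((n%:Z - 1) * (L - n)%N%:Z)) *~ ksign (koszul_exp (k - (ind x)%:Z) x zs)
     else 0).
Proof.
symmetry; under eq_sum_words => zs _ do rewrite mulrz_suml if_big.
rewrite sum_words_big; apply: eq_bigr => n _.
rewrite (@sum_words_split _ _ n); last by rewrite -ltnS.
apply: eq_sum_words => u szu; apply: eq_sum_words => w szw.
rewrite last_cat mpath_cat take_size_cat ?size_mpath // drop_size_cat ?size_mpath //.
case: ifP => // _.
rewrite /twist !nuMzl -!mulrzA -!ksignD koszul_exp_cat; congr (_ *~ ksign _).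
set e := k - (ind x)%:Z + ((ind x)%:Z - (ind (last x u))%:Z - (size u)%:Z).
rewrite (_ : k - 1 - (ind (last x u))%:Z = e + ((size u)%:Z - 1)); last by rewrite /e; ring.
by rewrite (koszul_exp_shift e) szu szw; ring.
Qed.

Definition nu_mu_term (a : A) (p : int) (cs : seq C) (qs : seq int) (r s : nat) : A :=
  nu a (take r.-1 cs ++ mu_of d pr (take s (drop r.-1 cs)) :: drop (r.-1 + s) cs)
  *~ (ksign (Posz (r + s * ((size cs).+1 - r - s))%N) *
      ksign ((Posz s - 2) * (p + \sum_(q <- take r.-1 qs) q))).

Hypothesis nu_mod : ainf_mod_rel hA hC nu (mu_of d pr).

Lemma mod_rel_nu_nu a p cs qs : hA p a -> hom_seq hC cs qs ->
  \sum_(n < (size cs).+1) nu (nu a (take n cs)) (drop n cs)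
     *~ ksign ((n%:Z - 1) * (size cs - n)%N%:Z) =
  - (\sum_(i < size cs) nu_mu_term a p cs qs i.+1 1
     + \sum_(i < size cs) (if (i.+2 <= size cs)%N then nu_mu_term a p cs qs i.+1 2 else 0)).
Proof.
move=> ha hcs; have /eqP := nu_mod ha hcs; rewrite /= addr_eq0 => /eqP rel.
rewrite -big_pairs_s_le2; last first.
  move=> r s r_ge1 s_ge3 le_rs; rewrite /nu_mu_term nu_mem0 ?mul0rz //.
  suff -> : mu_of d pr (take s (drop r.-1 cs)) = 0 by rewrite mem_cat mem_head orbT.
  have : (3 <= size (take s (drop r.-1 cs)))%N.
    by rewrite size_take size_drop; case: ifP => _; lia.
  by case: (take s _) => [|? [|? [|? ?]]].
rewrite /nu_mu_term -rel.
rewrite [RHS]big_mkcond [RHS]big_ord_recl /= add0r.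
apply: eq_bigr => i _; rewrite /bump /= add1n; congr (_ *~ _).
apply/esym/(ksign_mod2 (t := (size cs - i)%N%:Z)).
by rewrite subSS PoszM intS; ring.
Qed.

Hypothesis pr_additive : biadditive_fun pr.

Lemma pr0l c : pr 0 c = 0.
Proof. by case: pr_additive => prDl _; apply: (additive0 (f := pr^~ c)). Qed.

Lemma pr0r c : pr c 0 = 0.
Proof. by case: pr_additive => _ prDr; apply: (additive0 (f := pr c)). Qed.

Section PathSums.
Variables (k : int) (v : Crit -> A) (y x : Crit).
Hypothesis hv : hA (k - (ind x)%:Z) (v x).

Definition path_mu_term zs r s :=
  nu_mu_term (v x) (k - (ind x)%:Z) (mpath x zs) (mpath_deg x zs) r s.

Definition d_sum L := sum_words L (fun zs => if last x zs == y then
  (\sum_(i < L) path_mu_term zs i.+1 1) *~ ksign (koszul_exp (k - (ind x)%:Z) x zs)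
  else 0).

Definition pr_sum L := sum_words L (fun zs => if last x zs == y then
  (\sum_(i < L) if (i.+2 <= L)%N then path_mu_term zs i.+1 2 else 0)
    *~ ksign (koszul_exp (k - (ind x)%:Z) x zs)
  else 0).

Lemma dd_diagonal_mod L :
  \sum_(n < L.+1) dd_term k v y x n (L - n) = - (d_sum L + pr_sum L).
Proof.
rewrite dd_diagonalE -sum_wordsD -sum_wordsN; apply: eq_sum_words => zs sz.
have := mod_rel_nu_nu hv (mpath_hom x zs); rewrite size_mpath sz => ->.
by case: ifP => _; rewrite ?mulNrz ?mulrzDl // addr0 oppr0.
Qed.

(* The terms of paths of length [L.+1] in which two consecutive [m]'s are
   multiplied, the product sitting at position [i]. *)
Definition cocycle_term i u z w1 w' := if last w1 w' == y then
  nu (v x) (mpath x u ++ pr (m (last x u) z) (m z w1) :: mpath w1 w')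
    *~ ksign (Posz i.+1 + koszul_exp (k - (ind x)%:Z) x (u ++ z :: w1 :: w'))
  else 0.

Definition cocycle_sum L := \sum_(i < L) sum_words i (fun u =>
  \sum_(z : Crit) \sum_(w1 : Crit) sum_words (L - i.+1) (fun w' => cocycle_term i u z w1 w')).

Lemma pr_sum0 : pr_sum 0 = 0.
Proof. by rewrite /pr_sum /= big_ord0 mul0rz; case: ifP. Qed.

Lemma pr_sumS L : pr_sum L.+1 = cocycle_sum L.
Proof.
transitivity (\sum_(i < L) sum_words L.+1 (fun zs => if last x zs == y then
   path_mu_term zs i.+1 2 *~ ksign (koszul_exp (k - (ind x)%:Z) x zs) else 0)).
  rewrite -sum_words_big /pr_sum; apply: eq_sum_words => zs _.
  case: (last x zs == y); last by rewrite big1.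
  rewrite big_ord_recr /= ltnn addr0 mulrz_suml; apply: eq_bigr => i _.
  by rewrite ltnS ltn_ord.
apply: eq_bigr => i _; have lt_iL := ltn_ord i.
rewrite (@sum_words_split _ _ i); last by lia.
apply: eq_sum_words => u szu.
rewrite (_ : (L.+1 - i)%N = (L - i.+1).+2) /=; last by lia.
apply: eq_bigr => z _; apply: eq_bigr => w1 _; apply: eq_sum_words => w' szw.
rewrite /cocycle_term last_cat /=; case: ifP => // _.
rewrite /path_mu_term /nu_mu_term mpath_cat /= take_size_cat ?size_mpath //.
rewrite addnC -drop_drop !drop_size_cat ?size_mpath //= take0 drop0 -mulrzA.
set t := (_ - i.+1 - 2)%N; rewrite subrr mul0r mulr1 -ksignD; congr (_ *~ _).
by apply: (ksign_mod2 (t := t%:Z)); rewrite PoszD PoszM; ring.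
Qed.

Lemma d_path_term L i u w1 w' : size u = i -> size w' = (L - i.+1)%N -> (i < L)%N ->
  (if last x (u ++ w1 :: w') == y then path_mu_term (u ++ w1 :: w') i.+1 1
      *~ ksign (koszul_exp (k - (ind x)%:Z) x (u ++ w1 :: w')) else 0) =
  - \sum_(z : Crit) cocycle_term i u z w1 w'.
Proof.
move=> szu szw lt_iL.
rewrite /cocycle_term last_cat /=; case: ifP => _; last by rewrite big1 ?oppr0.
rewrite /path_mu_term /nu_mu_term mpath_cat /= take_size_cat ?size_mpath //.
rewrite drop_size_cat ?size_mpath //= take0 addn1 -addn1 addnC -drop_drop.
rewrite drop_size_cat ?size_mpath //= drop0.
pose nu_at c := nu (v x) (mpath x u ++ c :: mpath w1 w').
have nu_atD c c' : nu_at (c + c') = nu_at c + nu_at c' by apply: nuD_at.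
rewrite d_m -/(nu_at _) (additive_sum nu_atD) !mulrz_suml -sumrN.
apply: eq_bigr => z _; rewrite (additiveMz nu_atD) -!mulrzA -mulrNz; congr (_ *~ _).
rewrite mpath_deg_cat take_size_cat ?size_mpath_deg // sum_mpath_deg.
rewrite size_cat /= !size_mpath szu szw -ksign1D -!ksignD !koszul_exp_cat /= szu.
set e := k - (ind x)%:Z + ((ind x)%:Z - (ind (last x u))%:Z - i%:Z).
rewrite (_ : e + mdeg (last x u) z + mdeg z w1 = e + mdeg (last x u) w1 + (-1));
  last by ring.
rewrite (koszul_exp_shift (e + mdeg (last x u) w1) (-1)) szw.
by apply: (ksign_mod2 (t := L%:Z - e - i%:Z - 1)); rewrite /e; lia.
Qed.

Lemma d_sum_cocycle L : d_sum L = - cocycle_sum L.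
Proof.
transitivity (\sum_(i < L) sum_words L (fun zs => if last x zs == y then
   path_mu_term zs i.+1 1 *~ ksign (koszul_exp (k - (ind x)%:Z) x zs) else 0)).
  by rewrite -sum_words_big; apply: eq_sum_words => zs _; rewrite mulrz_suml if_big.
rewrite /cocycle_sum -sumrN; apply: eq_bigr => i _; have lt_iL := ltn_ord i.
rewrite (@sum_words_split _ _ i); last by lia.
rewrite -sum_wordsN; apply: eq_sum_words => u szu.
rewrite (_ : (L - i)%N = (L - i.+1).+1) /=; last by lia.
rewrite exchange_big -sumrN; apply: eq_bigr => w1 _.
rewrite -sum_words_big -sum_wordsN; apply: eq_sum_words => w' szw.
exact: (d_path_term w1 szu szw lt_iL).
Qed.

Lemma cocycle_sum_long K : (#|Crit| <= K)%N -> cocycle_sum K = 0.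
Proof.
move=> long; apply: big1 => i _; have lt_iK := ltn_ord i.
rewrite -[RHS](@sum_words0 Crit A i); apply: eq_sum_words => u szu.
apply: big1 => z _; apply: big1 => w1 _.
rewrite -[RHS](@sum_words0 Crit A (K - i.+1)); apply: eq_sum_words => w' szw.
rewrite /cocycle_term; case: ifP => // _; rewrite nu_mem0 ?mul0rz //.
have : ~~ ind_decreasing x (u ++ z :: w1 :: w').
  apply/negP => /size_ind_decreasing /leq_trans /(_ long).
  by rewrite size_cat /= szu szw; lia.
rewrite /ind_decreasing cat_path /= -/(ind_decreasing w1 w') !negb_and -!leqNgt.
rewrite mem_cat in_cons.
by case/or4P => [/mpath_has0->|/m_eq0->|/m_eq0->|/mpath_has0->];
  rewrite ?pr0l ?pr0r ?eqxx ?orbT.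
Qed.

Lemma dd_diagonal_telescope L :
  \sum_(n < L.+1) dd_term k v y x n (L - n) = pr_sum L.+1 - pr_sum L.
Proof. by rewrite dd_diagonal_mod d_sum_cocycle pr_sumS opprD opprK. Qed.

Lemma dd_sum_eq0 :
  \sum_(L < #|Crit|.+1) \sum_(n < L.+1) dd_term k v y x n (L - n) = 0.
Proof.
rewrite -(big_mkord xpredT (fun L => \sum_(n < L.+1) dd_term k v y x n (L - n))).
rewrite (@telescope_sumr_eq _ 0 #|Crit|.+1 pr_sum) //; last first.
  by move=> L _; apply: dd_diagonal_telescope.
by rewrite pr_sumS cocycle_sum_long // pr_sum0 subr0.
Qed.

End PathSums.

End TwistedDifferential.

Unset Implicit Arguments.

Theorem proposition4p8
  (C A : zmodType) (hC : int -> C -> Prop) (hA : int -> A -> Prop)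
  (d : C -> C) (pr : C -> C -> C)
  (Crit : finType) (ind : Crit -> nat) (m : Crit -> Crit -> C)
  (nu : A -> seq C -> A) :
  (* C = C_*(Omega X): nonnegatively graded, A_oo with mu_1 = d, mu_2 = pr, mu_i = 0 (i >= 3) *)
  is_grading hC -> nonneg_grading hC ->
  additive_fun d -> biadditive_fun pr ->
  (forall k c, hC k c -> hC (k - 1) (d c)) ->
  (forall k l c c', hC k c -> hC l c' -> hC (k + l) (pr c c')) ->
  ainf_alg_rel hC (mu_of d pr) ->
  (* twisting cocycle *)
  twisting_cocycle ind hC d pr m ->
  (* A_oo-module over C_*(Omega X) *)
  is_grading hA -> multiadditive nu -> nu_graded hA hC nu ->
  ainf_mod_rel hA hC nu (mu_of d pr) ->
  (* conclusion: partial has degree -1 and partial^2 = 0 *)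
  forall (Nb : nat), (#|Crit| <= Nb)%N ->
  forall (k : int) (v : Crit -> A), (forall x, hA (k - (ind x)%:Z) (v x)) ->
    (forall y, hA (k - 1 - (ind y)%:Z) (twisted_diff ind m nu Nb k v y)) /\
    (forall y, twisted_diff ind m nu Nb (k - 1) (twisted_diff ind m nu Nb k v) y = 0).
Proof.
move=> _ hC_nonneg _ pr_additive _ _ _ m_cocycle hA_grading nu_additive nu_hom nu_mod
  Nb le_Nb k v hv.
split=> y; first exact: (twisted_diff_hom m_cocycle hA_grading nu_hom Nb y hv).
rewrite twisted_diff2E //; apply: big1 => x _.
rewrite (dd_sum_diagonals hC_nonneg m_cocycle nu_additive) //.
exact: (dd_sum_eq0 hC_nonneg m_cocycle nu_additive nu_mod pr_additive y (hv x)).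
Qed.
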